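(* Let $m=pq$ with $p,q$ distinct primes. For each $n\ge4$ and each $i$ with $1\le i\le n$ there exists an edge-labeling $\alpha$ of the complete graph $K_n$ by ideals of $\mathbb{Z}/m\mathbb{Z}$ such that $\operatorname{rk}[\mathbb{Z}/m\mathbb{Z}]_{(K_n,\alpha)}=i$.
   Context: An edge-labeling assigns to each edge of a graph a nonzero proper ideal of $\mathbb{Z}/m\mathbb{Z}$. A spline on an edge-labeled graph $(G,\alpha)$ with vertices $v_1,\dots,v_n$ is a vector $(f_{v_1},\dots,f_{v_n})\in(\mathbb{Z}/m\mathbb{Z})^n$ with $f_{v_i}-f_{v_j}\in\alpha(v_iv_j)$ for every edge; the splines form a $\mathbb{Z}$-module $[\mathbb{Z}/m\mathbb{Z}]_{(G,\alpha)}$, whose rank $\operatorname{rk}$ is the smallest size of a generating set. *)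

From mathcomp Require Import all_boot all_algebra.
From mathcomp Require Import boolp.
Set Implicit Arguments. Unset Strict Implicit. Unset Printing Implicit Defensive.
Import GRing.Theory.
Local Open Scope ring_scope.

(* Ideals of the ring 'Z_m (= Z/mZ for m >= 2), as subsets. *)
Definition is_ideal (m : nat) (I : {set 'Z_m}) : Prop :=
  [/\ (0 : 'Z_m) \in I,
      (forall x y, x \in I -> y \in I -> x + y \in I),
      (forall x, x \in I -> - x \in I) &
      (forall r x, x \in I -> r * x \in I)].

Definition nonzero_proper_ideal (m : nat) (I : {set 'Z_m}) : Prop :=
  [/\ is_ideal I, I != [set 0] & I != [set: 'Z_m]].

Definition edge_labeling (n m : nat) (alpha : {set 'I_n} -> {set 'Z_m}) : Prop :=
  forall i j : 'I_n, i != j -> nonzero_proper_ideal (alpha [set i; j]).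

Definition splines (n m : nat) (alpha : {set 'I_n} -> {set 'Z_m})
  : {set {ffun 'I_n -> 'Z_m}} :=
  [set f : {ffun 'I_n -> 'Z_m} |
     [forall i : 'I_n, forall j : 'I_n, (i != j) ==> (f i - f j \in alpha [set i; j])]].

Definition in_Zspan (n m : nat) (G : {set {ffun 'I_n -> 'Z_m}})
  (x : {ffun 'I_n -> 'Z_m}) : Prop :=
  exists c : {ffun {ffun 'I_n -> 'Z_m} -> int}, x = \sum_(g in G) g *~ c g.

Definition generates (n m : nat) (S G : {set {ffun 'I_n -> 'Z_m}}) : Prop :=
  G \subset S /\ forall x, x \in S -> in_Zspan G x.

Definition spline_rank (n m : nat) (alpha : {set 'I_n} -> {set 'Z_m}) : nat :=
  \big[minn/#|splines alpha|]_(G : {set {ffun 'I_n -> 'Z_m}}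
      | `[< generates (splines alpha) G >]) #|G|.

From HB Require Import structures.
From mathcomp Require Import all_boot all_order all_algebra boolp zify.
Import Order.TTheory GRing.Theory.
Set Implicit Arguments. Unset Strict Implicit. Unset Printing Implicit Defensive.
Local Open Scope ring_scope.

(* Label each edge of K_n by one of the ideals pZ/mZ and qZ/mZ so that the
   p-edges stay inside a block B of vertices and every spline is constant on B
   and constant modulo q.  With the idempotent e = 1 (mod p), e = 0 (mod q),
   the Chinese remainder theorem writes every spline as f(B) * 1 plus the
   multiples (f v - f(B)) * e * [v] of the indicators of the k vertices outside
   B, so the rank is at most k + 1.  Conversely, multiplying by e realises
   every assignment of residues mod p to B and to the k outer vertices, so the
   splines have p ^ (k + 1) reductions mod p, while the Z-span of g generators
   has at most p ^ g.  A clique on B gives the ranks 2, ..., n; for rank 1 the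
   p-edges form a Hamiltonian path, whose complement is connected when n >= 4,
   so that every spline is constant. *)

Lemma generates_self n m (S : {set {ffun 'I_n -> 'Z_m}}) : generates S S.
Proof.
split=> // x xS; exists [ffun g => (g == x)%:R].
rewrite (bigD1 x) //= ffunE eqxx big1 ?addr0 // => g /andP[_ /negbTE g_neq_x].
by rewrite ffunE g_neq_x.
Qed.

Lemma spline_rank_le n m (alpha : {set 'I_n} -> {set 'Z_m}) G :
  generates (splines alpha) G -> (spline_rank alpha <= #|G|)%N.
Proof. by move=> /asboolP gen_G; rewrite /spline_rank -minEnat -leEnat bigmin_le_cond. Qed.

Lemma spline_rank_ge n m (alpha : {set 'I_n} -> {set 'Z_m}) k :
  (forall G, generates (splines alpha) G -> (k <= #|G|)%N) -> (k <= spline_rank alpha)%N.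
Proof.
move=> gen_ge; rewrite /spline_rank -minEnat -leEnat le_bigmin // leEnat.
- exact/gen_ge/generates_self.
- by move=> G /asboolP/gen_ge.
Qed.

Lemma in_Zspan_imset n m (I : finType) (gen : I -> {ffun 'I_n -> 'Z_m}) (c : I -> int) :
  in_Zspan [set gen i | i : I] (\sum_i gen i *~ c i).
Proof.
exists [ffun g => \sum_(i | gen i == g) c i].
rewrite (partition_big_imset gen) /=; apply: eq_bigr => g _.
by rewrite ffunE mulrz_sumr; apply: eq_bigr => i /eqP ->.
Qed.

Lemma mulrz_Zp_val N (x y : 'Z_N) : x *~ (val y)%:Z = x * y.
Proof. by rewrite -pmulrn -mulr_natr natr_Zp. Qed.

Lemma forall_in_set2 (T : finType) (P : pred T) (u v : T) :
  [forall w in [set u; v], P w] = P u && P v.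
Proof.
apply/forall_inP/andP => [Puv | [Pu Pv] w].
- by split; apply: Puv; rewrite !inE eqxx ?orbT.
- by rewrite !inE => /orP[] /eqP->.
Qed.

Section Reduction.
Variables (M r : nat).
Hypotheses (M_gt1 : (1 < M)%N) (r_gt1 : (1 < r)%N) (r_dvd_M : (r %| M)%N).

Definition redZp (x : 'Z_M) : 'Z_r := (val x)%:R.

Lemma redZp_nat a : redZp a%:R = a%:R.
Proof. by apply: val_inj; rewrite /redZp /= !val_Zp_nat // (modn_dvdm _ r_dvd_M). Qed.

Lemma redZp_eq x y : (redZp x == redZp y) = (val x == val y %[mod r]).
Proof. by rewrite -val_eqE /= !val_Zp_nat. Qed.

Lemma redZp_is_nmod_morphism : nmod_morphism redZp.
Proof.
split=> [|x y]; first exact: (redZp_nat 0).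
by rewrite -[x]natr_Zp -[y]natr_Zp -natrD !redZp_nat natrD.
Qed.

HB.instance Definition _ :=
  GRing.isNmodMorphism.Build 'Z_M 'Z_r redZp redZp_is_nmod_morphism.

Lemma redZp_is_monoid_morphism : monoid_morphism redZp.
Proof.
split=> [|x y]; first exact: (redZp_nat 1).
by rewrite -[x]natr_Zp -[y]natr_Zp -natrM !redZp_nat natrM.
Qed.

HB.instance Definition _ :=
  GRing.isMonoidMorphism.Build 'Z_M 'Z_r redZp redZp_is_monoid_morphism.

Lemma redZpM x y : redZp (x * y) = redZp x * redZp y.
Proof. exact: rmorphM. Qed.

Lemma redZp_liftK (t : 'Z_r) : redZp (val t)%:R = t.
Proof. by rewrite redZp_nat natr_Zp. Qed.

Definition redZp_ker : {set 'Z_M} := [set x | redZp x == 0].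

Lemma mem_redZp_ker_subr x y : (x - y \in redZp_ker) = (redZp x == redZp y).
Proof. by rewrite inE rmorphB subr_eq0. Qed.

Lemma redZp_ker_nonzero_proper : (r < M)%N -> nonzero_proper_ideal redZp_ker.
Proof.
move=> r_lt_M; split.
- split=> [|x y|x|s x]; rewrite !inE ?rmorph0 ?rmorphD ?rmorphN ?rmorphM //=.
  + by move=> /eqP-> /eqP->; rewrite addr0.
  + by move=> /eqP->; rewrite oppr0.
  + by move=> /eqP->; rewrite mulr0.
- apply/eqP => /setP/(_ r%:R); rewrite !inE redZp_nat pchar_Zp // eqxx.
  by move=> /esym; rewrite -val_eqE /= val_Zp_nat // modn_small //; lia.
- by apply/eqP => /setP/(_ 1); rewrite !inE rmorph1 oner_eq0.
Qed.

Variable n : nat.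

Definition redZp_ffun (f : {ffun 'I_n -> 'Z_M}) : {ffun 'I_n -> 'Z_r} :=
  [ffun v => redZp (f v)].

Lemma redZp_ffun_is_nmod_morphism : nmod_morphism redZp_ffun.
Proof.
by split=> [|f g]; apply/ffunP => v; rewrite !ffunE ?rmorph0 ?rmorphD.
Qed.

HB.instance Definition _ := GRing.isNmodMorphism.Build
  {ffun 'I_n -> 'Z_M} {ffun 'I_n -> 'Z_r} redZp_ffun redZp_ffun_is_nmod_morphism.

(* Modulo r only the residues mod r of the integer coefficients matter, so the
   Z-span of G has at most r ^ #|G| reductions. *)
Lemma card_redZp_generated S G :
  generates S G -> (#|redZp_ffun @: S| <= r ^ #|G|)%N.
Proof.
move=> [_ span_G].
pose comb (c : {ffun 'I_#|G| -> 'Z_r}) :=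
  \sum_(j < #|G|) redZp_ffun (enum_val j) *~ (val (c j))%:Z.
have red_comb : redZp_ffun @: S \subset comb @: setT.
  apply/subsetP => _ /imsetP[x /span_G[c ->] ->].
  apply/imsetP; exists [ffun j => (c (enum_val j))%:~R] => //.
  rewrite raddf_sum big_enum_val; apply: eq_bigr => j _.
  apply/ffunP => v; rewrite raddfMz !ffunMzE ffunE mulrz_Zp_val.
  by rewrite ffunE mulrzr.
apply: leq_trans (subset_leq_card red_comb) _.
by rewrite (leq_trans (leq_imset_card _ _)) // cardsT card_ffun !card_ord Zp_cast.
Qed.

Lemma spline_rank_ge_card_redZp (alpha : {set 'I_n} -> {set 'Z_M}) k :
  (r ^ k <= #|redZp_ffun @: splines alpha|)%N -> (k <= spline_rank alpha)%N.
Proof.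
move=> card_red; apply: spline_rank_ge => G /card_redZp_generated red_le.
by rewrite -(leq_exp2l _ _ r_gt1) (leq_trans card_red).
Qed.

End Reduction.

Arguments redZp {M} r x.
Arguments redZp_ker {M} r.
Arguments redZp_ffun {M} r {n} f.

Section TwoPrimes.
Variables p q : nat.
Hypotheses (p_prime : prime p) (q_prime : prime q) (p_neq_q : p != q).

Local Notation m := (p * q)%N.

Let p_gt1 : (1 < p)%N := prime_gt1 p_prime.
Let q_gt1 : (1 < q)%N := prime_gt1 q_prime.
Let m_gt1 : (1 < m)%N := ltn_mul p_gt1 q_gt1.
Let p_dvd_m : (p %| m)%N := dvdn_mulr q (dvdnn p).
Let q_dvd_m : (q %| m)%N := dvdn_mull p (dvdnn q).
Let p_lt_m : (p < m)%N := ltn_Pmulr q_gt1 (ltnW p_gt1).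
Let q_lt_m : (q < m)%N := ltn_Pmull p_gt1 (ltnW q_gt1).

Let coprime_pq : coprime p q.
Proof. by rewrite prime_coprime // dvdn_prime2. Qed.

Lemma redZp_pq_inj (x y : 'Z_m) :
  redZp p x = redZp p y -> redZp q x = redZp q y -> x = y.
Proof.
move=> /eqP; rewrite redZp_eq // => eq_p /eqP; rewrite redZp_eq // => eq_q.
have : val x == val y %[mod m] by rewrite chinese_remainder // eq_p eq_q.
have val_lt_m (z : 'Z_m) : (val z < m)%N by rewrite -[m in (_ < m)%N](Zp_cast m_gt1) ltn_ord.
by rewrite !modn_small ?val_lt_m // => /eqP/val_inj.
Qed.

Definition idem_p : 'Z_m := (chinese p q 1 0)%:R.

Lemma redZp_idem_p : redZp p idem_p = 1.
Proof. by rewrite redZp_nat // -Zp_nat_mod // chinese_modl // modn_small. Qed.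

Lemma redZp_idem_q : redZp q idem_p = 0.
Proof. by rewrite redZp_nat // -Zp_nat_mod // chinese_modr // mod0n. Qed.

Lemma redZp_idem_pM_lift (t : 'Z_p) : redZp p (idem_p * (val t)%:R) = t.
Proof. by rewrite redZpM // redZp_idem_p mul1r redZp_liftK. Qed.

Lemma redZp_q_idem_pM x : redZp q (idem_p * x) = 0.
Proof. by rewrite redZpM // redZp_idem_q mul0r. Qed.

Lemma idem_pM_ker_q x : x \in redZp_ker q -> idem_p * x = x.
Proof.
rewrite inE => /eqP x_q; apply: redZp_pq_inj.
- by rewrite redZpM // redZp_idem_p mul1r.
- by rewrite redZp_q_idem_pM x_q.
Qed.

Definition pq_labeling n (P : {set 'I_n} -> bool) (E : {set 'I_n}) : {set 'Z_m} :=
  if P E then redZp_ker p else redZp_ker q.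

Lemma pq_labeling_edge_labeling n (P : {set 'I_n} -> bool) :
  edge_labeling (pq_labeling P).
Proof. by move=> u v _; rewrite /pq_labeling; case: (P _); apply: redZp_ker_nonzero_proper. Qed.

Lemma splines_pqP n (P : {set 'I_n} -> bool) (f : {ffun 'I_n -> 'Z_m}) :
  reflect (forall u v, u != v -> if P [set u; v] then redZp p (f u) = redZp p (f v)
                                 else redZp q (f u) = redZp q (f v))
          (f \in splines (pq_labeling P)).
Proof.
rewrite inE; apply: (iffP forallP) => [spl_f u v uv | spl_f u].
- move: (spl_f u) => /forallP/(_ v)/implyP/(_ uv).
  by rewrite /pq_labeling; case: (P _); rewrite mem_redZp_ker_subr // => /eqP.
- apply/forallP => v; apply/implyP => uv; move: (spl_f u v uv).
  by rewrite /pq_labeling; case: (P _); rewrite mem_redZp_ker_subr // => ->.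
Qed.

Lemma spline_pq_edge_p n (P : {set 'I_n} -> bool) f u v :
  f \in splines (pq_labeling P) -> u != v -> P [set u; v] ->
  redZp p (f u) = redZp p (f v).
Proof. by move=> /splines_pqP/(_ u v) spl_f uv Puv; move: (spl_f uv); rewrite Puv. Qed.

Lemma spline_pq_edge_q n (P : {set 'I_n} -> bool) f u v :
  f \in splines (pq_labeling P) -> u != v -> ~~ P [set u; v] ->
  redZp q (f u) = redZp q (f v).
Proof. by move=> /splines_pqP/(_ u v) spl_f uv /negbTE Puv; move: (spl_f uv); rewrite Puv. Qed.

Section Block.
Variables (n k : nat) (P : {set 'I_n.+1} -> bool).
Hypotheses (k_le_n : (k <= n)%N) (P_in_block : forall E, P E -> [forall v in E, k <= v]%N).

Local Notation splines_P := (splines (pq_labeling P)).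

Definition block_index (v : 'I_n.+1) : 'I_k.+1 := inord (minn v k).

Lemma block_index_inord (j : 'I_k.+1) : block_index (inord j) = j.
Proof.
have j_le_k : (j <= k)%N by rewrite -ltnS.
by apply: val_inj; rewrite /block_index inordK ?(minn_idPl j_le_k) ?inord_val //; lia.
Qed.

Lemma block_index_ge (v : 'I_n.+1) : (k <= v)%N -> block_index v = ord_max.
Proof. by move=> k_le_v; apply: val_inj; rewrite /block_index (minn_idPr k_le_v) /= inordK. Qed.

Definition block_spline (t : {ffun 'I_k.+1 -> 'Z_p}) : {ffun 'I_n.+1 -> 'Z_m} :=
  [ffun v => idem_p * (val (t (block_index v)))%:R].

Lemma block_spline_in t : block_spline t \in splines_P.
Proof.
apply/splines_pqP => u v _; case Puv: (P _).
- move: (P_in_block Puv); rewrite forall_in_set2 => /andP[k_le_u k_le_v].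
  by rewrite !ffunE !block_index_ge.
- by rewrite !ffunE !redZp_q_idem_pM.
Qed.

Lemma spline_rank_pq_ge : (k.+1 <= spline_rank (pq_labeling P))%N.
Proof.
apply: (spline_rank_ge_card_redZp m_gt1 p_gt1 p_dvd_m).
pose red_block t := redZp_ffun p (block_spline t).
have red_block_inj : injective red_block.
  move=> t t' /ffunP eq_tt'; apply/ffunP => j; move: (eq_tt' (inord j)).
  by rewrite !ffunE !redZp_idem_pM_lift block_index_inord.
have <- : #|red_block @: [set: {ffun 'I_k.+1 -> 'Z_p}]| = (p ^ k.+1)%N.
  by rewrite card_imset // cardsT card_ffun !card_ord Zp_cast.
by apply/subset_leq_card/subsetP => _ /imsetP[t _ ->]; apply/imset_f/block_spline_in.
Qed.

Hypotheses
  (splines_const_mod_q : forall f, f \in splines_P ->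
     forall v, redZp q (f v) = redZp q (f ord_max))
  (splines_const_on_block : forall f, f \in splines_P ->
     forall v : 'I_n.+1, (k <= v)%N -> f v = f ord_max).

Definition block_generator (j : 'I_k.+1) : {ffun 'I_n.+1 -> 'Z_m} :=
  if (j < k)%N then [ffun v : 'I_n.+1 => if v == j :> nat then idem_p else 0]
  else [ffun=> 1].

Lemma block_generator_in j : block_generator j \in splines_P.
Proof.
apply/splines_pqP => u v _; rewrite /block_generator.
case: ltnP => [j_lt_k | _]; last by case: (P _); rewrite !ffunE.
case Puv: (P _); rewrite !ffunE.
- move: (P_in_block Puv); rewrite forall_in_set2 => /andP[k_le_u k_le_v].
  by rewrite !ifN //; lia.
- by rewrite !(fun_if (redZp q)) redZp_idem_q rmorph0 // !if_same.
Qed.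

Lemma spline_block_decomposition f : f \in splines_P ->
  let coef j := if (j < k)%N then f (inord j) - f ord_max else f ord_max in
  f = \sum_(j < k.+1) block_generator j *~ (val (coef j))%:Z.
Proof.
move=> spl_f coef; apply/ffunP => v.
rewrite sum_ffunE big_ord_recr /= !ffunMzE mulrz_Zp_val.
rewrite /block_generator /coef ltnn ffunE mul1r.
under eq_bigr => j _ do rewrite ffunMzE mulrz_Zp_val ltn_ord ffunE.
case: (ltnP v k) => [v_lt_k | k_le_v].
- rewrite (bigD1 (Ordinal v_lt_k)) //= eqxx big1 ?addr0; last first.
    move=> j j_neq_v; rewrite ifN ?mul0r //; apply: contra j_neq_v => /eqP v_eq_j.
    by apply/eqP/val_inj; rewrite /= v_eq_j.
  rewrite inord_val idem_pM_ker_q ?subrK // mem_redZp_ker_subr //.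
  by rewrite splines_const_mod_q.
- rewrite big1 ?add0r ?splines_const_on_block // => j _.
  by rewrite ifN ?mul0r //=; have := ltn_ord j; lia.
Qed.

Lemma spline_rank_pq_le : (spline_rank (pq_labeling P) <= k.+1)%N.
Proof.
apply: (@leq_trans #|[set block_generator j | j : 'I_k.+1]|); last first.
  by rewrite (leq_trans (leq_imset_card _ _)) // card_ord.
apply: spline_rank_le; split.
- by apply/subsetP => _ /imsetP[j _ ->]; apply: block_generator_in.
- by move=> f /spline_block_decomposition ->; apply: in_Zspan_imset.
Qed.

Lemma spline_rank_pq_block : spline_rank (pq_labeling P) = k.+1.
Proof. by apply/eqP; rewrite eqn_leq spline_rank_pq_le spline_rank_pq_ge. Qed.

End Block.

Definition clique_edge n k (E : {set 'I_n}) := [forall v in E, k <= v]%N.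

Lemma spline_rank_clique n k : (0 < k)%N -> (k <= n)%N ->
  spline_rank (pq_labeling (@clique_edge n.+1 k)) = k.+1.
Proof.
move=> k_gt0 k_le_n.
have mod_q f : f \in splines (pq_labeling (@clique_edge n.+1 k)) ->
    forall v, redZp q (f v) = redZp q (f ord0).
  move=> spl_f v; have [-> // | v_neq0] := eqVneq v ord0.
  by apply: (spline_pq_edge_q spl_f v_neq0); rewrite /clique_edge forall_in_set2 /=; lia.
apply: spline_rank_pq_block => // [f spl_f v | f spl_f v k_le_v].
- by rewrite !(mod_q f).
- have [-> // | v_neq_max] := eqVneq v ord_max.
  apply: redZp_pq_inj; last by rewrite !(mod_q f).
  by apply: (spline_pq_edge_p spl_f v_neq_max); rewrite /clique_edge forall_in_set2 k_le_v.
Qed.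

Definition path_edge n (E : {set 'I_n}) := [forall u in E, forall v in E, u <= v.+1]%N.

Lemma path_edge2 n (u v : 'I_n) : path_edge [set u; v] = (u <= v.+1)%N && (v <= u.+1)%N.
Proof. by rewrite /path_edge !forall_in_set2; lia. Qed.

Lemma path_splines_const n f : (3 <= n)%N ->
  f \in splines (pq_labeling (@path_edge n.+1)) -> forall v, f v = f ord0.
Proof.
move=> n_ge3 spl_f v; apply: redZp_pq_inj.
- have path_p j : (j <= n)%N -> redZp p (f (inord j)) = redZp p (f ord0).
    elim: j => [_ | j IH j_lt_n].
      by congr (redZp p (f _)); apply: val_inj; rewrite /= inordK.
    rewrite -IH; last exact: ltnW.
    apply: (spline_pq_edge_p spl_f).
      by apply/eqP => /(congr1 val); rewrite /= !inordK //; lia.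
    by rewrite path_edge2 !inordK //; lia.
  by rewrite -[v]inord_val path_p // -ltnS.
- have q_edge (u w : 'I_n.+1) : (u.+1 < w)%N -> redZp q (f u) = redZp q (f w).
    move=> u_w; apply: (spline_pq_edge_q spl_f).
      by apply/eqP => u_eq_w; move: u_w; rewrite u_eq_w; lia.
    by rewrite path_edge2; lia.
  have [v_gt1 | v_le1] := ltnP 1 v; first by rewrite (q_edge ord0 v).
  (* Vertices 0 and 1 are joined through vertex 3: this is where n >= 3 is needed. *)
  have w_lt : (3 < n.+1)%N by [].
  by rewrite (q_edge v (Ordinal w_lt)) ?(q_edge ord0 (Ordinal w_lt)) //=; lia.
Qed.

Lemma spline_rank_path n : (3 <= n)%N ->
  spline_rank (pq_labeling (@path_edge n.+1)) = 1%N.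
Proof.
move=> n_ge3; apply: (@spline_rank_pq_block n 0) => // [E _ | f spl_f v | f spl_f v _].
- exact/forall_inP.
- by rewrite !(path_splines_const n_ge3 spl_f).
- by rewrite !(path_splines_const n_ge3 spl_f).
Qed.

End TwoPrimes.

Local Close Scope ring_scope.

Theorem mainTheorem13 (p q : nat) :
  prime p -> prime q -> p != q ->
  forall n : nat, 4 <= n ->
  forall i : nat, 1 <= i <= n ->
  exists alpha : {set 'I_n} -> {set 'Z_(p * q)},
    edge_labeling alpha /\ spline_rank alpha = i.
Proof.
move=> p_prime q_prime p_neq_q [|n] // n_ge4 [|k] // /andP[_ k_le_n].
have [-> | k_gt0] := posnP k.
- exists (pq_labeling p q (@path_edge n.+1)).
  by split; [apply: pq_labeling_edge_labeling | apply: spline_rank_path].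
- exists (pq_labeling p q (@clique_edge n.+1 k)).
  by split; [apply: pq_labeling_edge_labeling | apply: spline_rank_clique].
Qed.
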